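(* Let $q$ be a prime power and $f:\mathbb{F}_q\to\mathbb{F}_q$ be differentially $d$-uniform. Then \[|\mathrm{Im}(f)|\geq \left\lceil\frac{q}{d+1}\right\rceil.\] Moreover, if $|\mathrm{Im}(f)|=\left\lceil\frac{q}{d+1}\right\rceil=\frac{q+\varepsilon}{d+1}$ with $1\leq\varepsilon\leq d$, then \[\sum_{y\in\mathrm{Im}(f)}(\omega(y)-(d+1))^2\leq (d+1)(\varepsilon-1)+1.\]
   Context: A map $f:\mathbb{F}_q\to\mathbb{F}_q$ is called differentially $d$-uniform ($d$-uniform) if $d=\max_{a\neq 0,\,b\in\mathbb{F}_q}|\{x\in\mathbb{F}_q: f(x+a)-f(x)=b\}|$. $\mathrm{Im}(f)$ is the image set of $f$, and for $y\in\mathbb{F}_q$, $\omega(y)=|f^{-1}(\{y\})|$ is the number of preimages of $y$ under $f$. *)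

From mathcomp Require Import all_boot all_order all_algebra.
Set Implicit Arguments. Unset Strict Implicit. Unset Printing Implicit Defensive.
Import GRing.Theory.
Local Open Scope ring_scope.

Definition diff_count (F : finFieldType) (f : F -> F) (a b : F) : nat :=
  #|[set x : F | f (x + a) - f x == b]|.

Definition diff_uniformity (F : finFieldType) (f : F -> F) : nat :=
  \max_(a : F | a != 0%R) \max_(b : F) diff_count f a b.

Definition is_diff_uniform (F : finFieldType) (f : F -> F) (d : nat) : Prop :=
  diff_uniformity f = d.

Definition Im (F : finFieldType) (f : F -> F) : {set F} := [set f x | x : F].
Definition omega (F : finFieldType) (f : F -> F) (y : F) : nat :=
  #|[set x : F | f x == y]|.

Definition ceil_div (m n : nat) : nat := ((m + n.-1) %/ n)%N.

From mathcomp Require Import all_boot all_order all_algebra.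
From mathcomp Require Import zify ring.
Set Implicit Arguments. Unset Strict Implicit. Unset Printing Implicit Defensive.
Import GRing.Theory.
Local Open Scope ring_scope.

(* Write q = #|F|, n = #|Im f| and S = \sum_(y in Im f) omega(y)^2.
   S counts the pairs (x, x') with f x = f x'; writing x' = x + a and
   separating a = 0 gives S = q + \sum_(a != 0) diff_count f a 0, hence
   S <= q + (q - 1) d by d-uniformity.  Since \sum_(y in Im f) omega(y) = q,
   expanding the squares gives
     \sum_(y in Im f) (omega(y) - (d+1))^2 = S - 2 (d+1) q + n (d+1)^2
                                           <= (d+1) (n (d+1) - q) - d.
   The left-hand side is nonnegative, so n (d+1) >= q, which is the lower
   bound on n; and when n (d+1) = q + eps the right-hand side equals
   (d+1) (eps - 1) + 1, which is the second claim. *)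

Section ImageCounting.

Variables (F : finFieldType) (f : F -> F).

Lemma sum_over_image (G : F -> nat) :
  (\sum_x G (f x) = \sum_(y in Im f) omega f y * G y)%N.
Proof.
rewrite (partition_big f (mem (Im f))) /=; last by move=> x _; apply/imsetP; exists x.
apply: eq_bigr => y _.
rewrite (eq_bigr (fun _ => G y)); last by move=> x /eqP ->.
by rewrite sum_nat_const /omega; congr (_ * _); apply: eq_card => x; rewrite !inE.
Qed.

Lemma sum_omega : (\sum_(y in Im f) omega f y = #|F|)%N.
Proof.
rewrite -sum1_card (sum_over_image (fun _ => 1%N)).
by apply: eq_bigr => y _; rewrite muln1.
Qed.

Lemma omega_as_translates (x : F) :
  omega f (f x) = (\sum_a (f (x + a)%R == f x))%N.
Proof.
rewrite /omega -sum1_card.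
rewrite (eq_bigl (fun x' => f x' == f x)); last by move=> x'; rewrite inE.
by rewrite -big_mkcond /= (reindex_inj (addrI x)).
Qed.

Lemma diff_count0E (a : F) :
  diff_count f a 0 = (\sum_x (f (x + a)%R == f x))%N.
Proof.
rewrite /diff_count -sum1_card big_mkcond /=; apply: eq_bigr => x _.
by rewrite inE subr_eq0.
Qed.

(* Collision count: the number of pairs x, x' with f x = f x' is q plus the
   number of solutions of f (x + a) = f x over all nonzero shifts a. *)
Lemma sum_sq_omega :
  (\sum_(y in Im f) omega f y * omega f y
     = #|F| + \sum_(a | a != 0%R) diff_count f a 0%R)%N.
Proof.
rewrite -(sum_over_image (omega f)).
rewrite (eq_bigr _ (fun x _ => omega_as_translates x)) exchange_big /=.
rewrite (bigD1 0) //= (eq_bigr (fun _ => 1%N)); last by move=> x _; rewrite addr0 eqxx.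
by rewrite sum1_card; congr (_ + _); apply: eq_bigr => a _; rewrite diff_count0E.
Qed.

Lemma diff_count_le_uniformity (a b : F) :
  a != 0 -> (diff_count f a b <= diff_uniformity f)%N.
Proof.
move=> a_neq0; rewrite /diff_uniformity.
apply: leq_trans (@leq_bigmax_cond _ (fun a' : F => a' != 0)
  (fun a' => \max_b diff_count f a' b) a a_neq0).
exact: (@leq_bigmax_cond _ xpredT (diff_count f a) b (erefl true)).
Qed.

Lemma sum_sq_omega_le (d : nat) :
  is_diff_uniform f d ->
  (\sum_(y in Im f) omega f y * omega f y <= #|F| + (#|F| - 1) * d)%N.
Proof.
move=> unif_d; rewrite sum_sq_omega leq_add2l.
apply: leq_trans (_ : \sum_(a | a != 0%R) d <= _)%N.
  by apply: leq_sum => a a_neq0; rewrite -unif_d diff_count_le_uniformity.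
by rewrite sum_nat_const (eq_card (B := predC1 0)) // cardC1 subn1.
Qed.

End ImageCounting.

Lemma sum_sq_deviation (I : finType) (A : {set I}) (w : I -> nat) (c : int) :
  (\sum_(i in A) ((w i)%:Z - c) ^+ 2
     = (\sum_(i in A) w i * w i)%N%:Z - 2 * c * (\sum_(i in A) w i)%N%:Z
       + #|A|%:Z * c ^+ 2)%R.
Proof.
rewrite (eq_bigr (fun i => (w i)%:Z * (w i)%:Z - 2 * c * (w i)%:Z + c ^+ 2));
  last by move=> i _; ring.
rewrite !big_split /= sumrN -mulr_sumr sumr_const !(big_morph Posz PoszD (erefl _)).
rewrite (eq_bigr (fun i => (w i)%:Z * (w i)%:Z) (fun i _ => PoszM _ _)).
by rewrite pmulrn -mulrzr; ring.
Qed.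

Lemma deviation_le (F : finFieldType) (f : F -> F) (d : nat) :
  is_diff_uniform f d ->
  (\sum_(y in Im f) ((omega f y)%:Z - (d.+1)%:Z) ^+ 2
     <= (d.+1)%:Z * ((#|Im f| * d.+1)%:Z - #|F|%:Z) - d%:Z)%R.
Proof.
move=> unif_d; rewrite sum_sq_deviation sum_omega.
have q_gt0 : (0 < #|F|)%N by apply/card_gt0P; exists 0.
move: (sum_sq_omega_le unif_d); rewrite -lez_nat.
set S := (\sum_(y in Im f) _)%N; set q := #|F|; set n := #|Im f|.
by move: q_gt0; nia.
Qed.

Lemma card_le_image_mul (F : finFieldType) (f : F -> F) (d : nat) :
  is_diff_uniform f d -> (#|F| <= #|Im f| * d.+1)%N.
Proof.
move=> unif_d.
have dev_ge0 : 0 <= \sum_(y in Im f) ((omega f y)%:Z - (d.+1)%:Z) ^+ 2.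
  by apply: Num.Theory.sumr_ge0 => y _; apply: Num.Theory.sqr_ge0.
have bound_ge0 : 0 <= (d.+1)%:Z * ((#|Im f| * d.+1)%:Z - #|F|%:Z) - d%:Z.
  exact: Order.le_trans dev_ge0 (deviation_le unif_d).
have : 0 <= (d.+1)%:Z * ((#|Im f| * d.+1)%:Z - #|F|%:Z).
  by move: bound_ge0; clear; lia.
by rewrite Num.Theory.pmulr_rge0 // Num.Theory.subr_ge0 lez_nat.
Qed.

Theorem theorem2p6 (F : finFieldType) (f : F -> F) (d : nat) :
  is_diff_uniform f d ->
  (ceil_div #|F| d.+1 <= #|Im f|)%N /\
  (forall eps : nat, (1 <= eps <= d)%N ->
     #|Im f| = ceil_div #|F| d.+1 ->
     (#|Im f| * d.+1 = #|F| + eps)%N ->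
     (\sum_(y in Im f) ((omega f y)%:Z - (d.+1)%:Z) ^+ 2
        <= (d.+1 * (eps - 1) + 1)%:Z)%R).
Proof.
move=> unif_d; split.
  have q_le := card_le_image_mul unif_d.
  by rewrite /ceil_div -ltnS ltn_divLR // mulSn; clear -q_le; lia.
(* With n (d+1) = q + eps the central estimate reads (d+1) eps - d. *)
move=> [//|e] _ _ n_eq; rewrite subSS subn0.
have -> : (d.+1 * e + 1)%N%:Z = (d.+1)%:Z * (e.+1)%:Z - d%:Z.
  by rewrite PoszD PoszM -!natz; ring.
by move: (deviation_le unif_d); rewrite n_eq PoszD addrAC subrr add0r.
Qed.
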